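(* Let $\mathcal{E}$ be a set, let $d\ge 1$, and let $x\mapsto \vec{x}\in\mathbb{R}^d$ be an arbitrary assignment of a vector to each element $x\in\mathcal{E}$. Fix vectors $w_1,b_1\in\mathbb{R}^d$ and define $g:\mathbb{R}^d\to\mathbb{R}^d$ by $g(\vec{v})=\mathrm{ReLU}(w_1\otimes \vec{v}+b_1)$, where $\otimes$ is component-wise multiplication and $\mathrm{ReLU}(u)=\max(0,u)$ is applied component-wise, and define $f(\vec{v})=\vec{v}+g(\vec{v})$. Define a binary relation $\prec$ on $\mathcal{E}$ by $$x\prec y \iff f(\vec{x})_i<\vec{y}_i \text{ for all } i=1,\dots,d.$$ Then $\prec$ is asymmetric: for any two distinct $x,y\in\mathcal{E}$, if $x\prec y$ then $y\nprec x$.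
   Context: $\vec{v}_i$ denotes the $i$-th component of $\vec{v}\in\mathbb{R}^d$. *)

From HB Require Import structures.
From mathcomp Require Import all_boot all_order all_algebra.
From mathcomp Require Import reals.
Set Implicit Arguments. Unset Strict Implicit. Unset Printing Implicit Defensive.
Import Order.TTheory GRing.Theory Num.Theory.
Local Open Scope ring_scope.

Definition relu (R : realType) (u : R) : R := Num.max 0 u.

Definition gmap (R : realType) (d : nat) (w1 b1 v : 'rV[R]_d) : 'rV[R]_d :=
  \row_i relu (w1 0 i * v 0 i + b1 0 i).

Definition fmap (R : realType) (d : nat) (w1 b1 v : 'rV[R]_d) : 'rV[R]_d :=
  v + gmap w1 b1 v.

Definition prec (R : realType) (d : nat) (E : Type) (vec : E -> 'rV[R]_d)
  (w1 b1 : 'rV[R]_d) (x y : E) : Prop :=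
  forall i : 'I_d, fmap w1 b1 (vec x) 0 i < vec y 0 i.

From HB Require Import structures.
From mathcomp Require Import all_boot all_order all_algebra.
From mathcomp Require Import reals.
Import Order.TTheory GRing.Theory Num.Theory.
Local Open Scope ring_scope.

(* ReLU is nonnegative, so f(v) dominates v componentwise; hence x ≺ y forces
   x_i < y_i in every coordinate, and y ≺ x would force the reverse. *)

Section PrecAsymmetric.

Variables (R : realType) (d : nat) (E : Type) (vec : E -> 'rV[R]_d).
Variables (w1 b1 : 'rV[R]_d).

Lemma relu_ge0 (u : R) : 0 <= relu u.
Proof. by rewrite /relu le_max lexx. Qed.

Lemma fmap_ge (v : 'rV[R]_d) (i : 'I_d) : v 0 i <= fmap w1 b1 v 0 i.
Proof. by rewrite /fmap /gmap !mxE lerDl relu_ge0. Qed.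

Lemma prec_lt (x y : E) : prec vec w1 b1 x y -> forall i, vec x 0 i < vec y 0 i.
Proof. by move=> xy i; apply: le_lt_trans (xy i); apply: fmap_ge. Qed.

Lemma prec_asym (x y : E) :
  (0 < d)%N -> prec vec w1 b1 x y -> ~ prec vec w1 b1 y x.
Proof.
move=> d_gt0 /prec_lt xy /prec_lt yx; pose i := Ordinal d_gt0.
by have := lt_trans (xy i) (yx i); rewrite ltxx.
Qed.

End PrecAsymmetric.

Theorem theorem1 (R : realType) (E : Type) (d : nat) (hd : (1 <= d)%N)
  (vec : E -> 'rV[R]_d) (w1 b1 : 'rV[R]_d) (x y : E) :
  x <> y -> prec vec w1 b1 x y -> ~ prec vec w1 b1 y x.
Proof. by move=> _; apply: prec_asym. Qed.
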